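(* If $H$ is a disjoint union of $n$ cycles (each of length at least $3$) having $20$ vertices in total, with adjacency matrix $A$, then the matrix $B(H)=-\frac4{15}A+I+\frac7{45}(J-I-A)$ has rank $21-n$.
   Context: $I$ is the identity matrix and $J$ the all-ones $20\times20$ matrix. *)

From HB Require Import structures.
From mathcomp Require Import all_boot all_order all_algebra.
Set Implicit Arguments. Unset Strict Implicit. Unset Printing Implicit Defensive.
Import Order.TTheory GRing.Theory Num.Theory.
Local Open Scope ring_scope.

(* A disjoint union of cycles on the vertex set 'I_N is given by a list [cs]
   of cycles; each cycle is a sequence of vertices c = [:: v1; ...; vk]
   whose edges are v1v2, ..., v(k-1)vk, vkv1 (cyclic successor [next c]). *)
Definition is_cycle_decomp (N : nat) (cs : seq (seq 'I_N)) : Prop :=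
  [/\ all (fun c => 3 <= size c)%N cs,
      uniq (flatten cs) &
      forall v : 'I_N, v \in flatten cs].

Definition cycles_adj (N : nat) (cs : seq (seq 'I_N)) : 'M[rat]_N :=
  \matrix_(i < N, j < N)
    (has (fun c => (i \in c) && ((j == next c i) || (i == next c j))) cs)%:R.

Definition matB (N : nat) (A : 'M[rat]_N) : 'M[rat]_N :=
  - (4%:R / 15%:R) *: A + 1%:M
  + (7%:R / 45%:R) *: (const_mx 1 - 1%:M - A).

From HB Require Import structures.
From mathcomp Require Import all_boot all_order all_algebra.
From mathcomp Require Import fingroup perm.
From mathcomp Require Import ring zify.
Set Implicit Arguments. Unset Strict Implicit. Unset Printing Implicit Defensive.
Import Order.TTheory GRing.Theory Num.Theory.
Local Open Scope ring_scope.

(* With P the permutation matrix of the successor map along the cycles, the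
   adjacency matrix is P + P^T and B = 19/45 (1 - P^T)(1 - P^T)^T + 7/45 J,
   a positive combination of Gram matrices.  Hence x B = 0 iff x is constant
   on every cycle and has coordinate sum 0.  Vectors constant on the cycles
   form an n-dimensional space containing the all-ones vector, which J does
   not annihilate, so the kernel of B has dimension n - 1 and B has rank
   20 - (n - 1). *)

Section SeqCycles.
Variable T : eqType.

Lemma uniq_flatten_nth_mem (cs : seq (seq T)) i k v :
  uniq (flatten cs) -> (i < size cs)%N -> (k < size cs)%N ->
  v \in nth [::] cs i -> v \in nth [::] cs k -> i = k.
Proof.
elim: cs i k => [|c cs IH] [|i] [|k] //=; rewrite cat_uniq => /and3P[_ cs'c ucs] ltis ltks.
- move=> vc vk; case/hasP: cs'c; exists v => //.
  by apply/flattenP; exists (nth [::] cs k); rewrite ?mem_nth.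
- move=> vi vc; case/hasP: cs'c; exists v => //.
  by apply/flattenP; exists (nth [::] cs i); rewrite ?mem_nth.
- by move=> vi vk; congr S; apply: IH.
Qed.

Lemma uniq_flatten_mem (cs : seq (seq T)) c : uniq (flatten cs) -> c \in cs -> uniq c.
Proof.
elim: cs => [|d cs IH] //=; rewrite cat_uniq inE => /and3P[ud _ ucs] /orP[/eqP->//|].
exact: IH.
Qed.

Lemma next_nth_modn (c : seq T) x0 k : uniq c -> (k < size c)%N ->
  next c (nth x0 c k) = nth x0 c (k.+1 %% size c).
Proof.
move=> uc ltkc; rewrite next_nth mem_nth // index_uniq //.
case: c uc ltkc => [|y p] //= uc ltkc.
case: (ltnP k (size p)) => ltkp; first by rewrite modn_small //= (set_nth_default x0).
have -> : k = size p by lia.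
by rewrite modnn /= nth_default.
Qed.

Lemma next_next_neq (c : seq T) x : uniq c -> (2 < size c)%N -> x \in c ->
  next c (next c x) != x.
Proof.
move=> uc c_gt2 xc; set m := size c; set k := index x c.
have ltkm : (k < m)%N by rewrite index_mem.
have xE : nth x c k = x by rewrite nth_index.
have ltk1m : (k.+1 %% m < m)%N by rewrite ltn_pmod //; lia.
rewrite -{1 2}xE !next_nth_modn // nth_uniq ?ltn_pmod //; last by lia.
rewrite -[k in _ != k](modn_small ltkm) -addn1 modnDml -/m.
rewrite addSnnS -[X in _ != (X %% m)%N]addn0 eqn_modDl.
by rewrite mod0n modn_small.
Qed.
End SeqCycles.

Section RowNorm.
Variables (R : realFieldType) (n : nat).

Lemma mulmx_trmx00 (y : 'rV[R]_n) : (y *m y^T) 0 0 = \sum_j y 0 j ^+ 2.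
Proof. by rewrite mxE; apply: eq_bigr => j _; rewrite mxE expr2. Qed.

Lemma mulmx_trmx00_ge0 (y : 'rV[R]_n) : 0 <= (y *m y^T) 0 0.
Proof. by rewrite mulmx_trmx00 sumr_ge0 // => j _; rewrite sqr_ge0. Qed.

Lemma mulmx_trmx00_eq0 (y : 'rV[R]_n) : ((y *m y^T) 0 0 == 0) = (y == 0).
Proof.
apply/idP/eqP => [|->]; last by rewrite mul0mx mxE.
rewrite mulmx_trmx00 psumr_eq0 => [/allP y0|j _]; last exact: sqr_ge0.
apply/rowP => j; rewrite mxE; apply/eqP.
by rewrite -sqrf_eq0; apply: (implyP (y0 j _)); rewrite ?mem_index_enum.
Qed.

End RowNorm.

Section GramKernel.
Variables (R : realFieldType) (m n p : nat).
Variables (a b : R) (C : 'M[R]_(m, n)) (E : 'M[R]_(m, p)).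
Hypotheses (a_gt0 : 0 < a) (b_gt0 : 0 < b).

Lemma sub_kermx_gram2 (x : 'rV[R]_m) :
  (x <= kermx (a *: (C *m C^T) + b *: (E *m E^T)))%MS =
  (x <= kermx C :&: kermx E)%MS.
Proof.
rewrite sub_capmx !sub_kermx mulmxDr -!scalemxAr !mulmxA.
apply/eqP/andP => [xM0 | [/eqP-> /eqP->]]; last by rewrite !mul0mx !scaler0 addr0.
set qC : R := ((x *m C) *m (x *m C)^T) 0 0; set qE : R := ((x *m E) *m (x *m E)^T) 0 0.
have q0 : a * qC + b * qE = 0.
  have := congr1 (fun M => (M *m x^T) 0 0) xM0.
  rewrite mul0mx mulmxDl -!scalemxAl -[x *m C *m _ *m _]mulmxA.
  rewrite -[x *m E *m _ *m _]mulmxA -!trmx_mul.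
  have entry00 (M1 M2 : 'M[R]_1) : (a *: M1 + b *: M2) 0 0 = a * M1 0 0 + b * M2 0 0.
    by rewrite !mxE.
  by rewrite entry00 [X in _ = X -> _]mxE.
rewrite -!mulmx_trmx00_eq0 -/qC -/qE; apply/andP.
move/eqP: q0; rewrite paddr_eq0 ?mulr_ge0 ?mulmx_trmx00_ge0 ?ltW //.
by rewrite !mulf_eq0 (gt_eqF a_gt0) (gt_eqF b_gt0).
Qed.

End GramKernel.

Lemma mxrank_cap_kermx_col (F : fieldType) m n (V : 'M[F]_(m, n)) (u : 'cV[F]_n) :
  (u^T <= V)%MS -> u^T *m u != 0 -> \rank (V :&: kermx u) = (\rank V).-1 :> nat.
Proof.
move=> uV uu_neq0; set K := kermx u.
have u_neq0 : u^T != 0 by apply: contraNneq uu_neq0 => ->; rewrite mul0mx.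
have rK : \rank K = n.-1 :> nat by rewrite mxrank_ker -mxrank_tr rank_rV u_neq0 subn1.
have rV_gt0 : (0 < \rank V)%N.
  by apply: leq_trans (mxrankS uV); rewrite rank_rV u_neq0.
have rVK : \rank (V + K) = n :> nat.
  have : (K < V + K)%MS.
    rewrite ltmxE addsmxSr; apply: contraNN uu_neq0 => VK_K.
    by rewrite -sub_kermx (submx_trans _ VK_K) // (submx_trans uV) ?addsmxSl.
  rewrite ltmxErank addsmxSr rK /= => ltK; have := rank_leq_col (V + K)%MS; lia.
have := rank_leq_col V; have := mxrank_sum_cap V K; rewrite rVK rK; lia.
Qed.

Lemma mul_const_trmx (R : pzSemiRingType) n :
  (const_mx 1 : 'cV[R]_n) *m (const_mx 1 : 'cV_n)^T = const_mx 1.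
Proof. by apply/matrixP => i j; rewrite !mxE big_ord1 !mxE mulr1. Qed.

Lemma mulmx_tr_perm_mx (R : pzSemiRingType) n (s : 'S_n) :
  (perm_mx s)^T *m perm_mx s = 1%:M :> 'M[R]_n.
Proof. by rewrite tr_perm_mx -perm_mxM mulVg perm_mx1. Qed.

Lemma sub_kermx_perm_fixP (F : fieldType) n (s : 'S_n) (x : 'rV[F]_n) :
  reflect (forall j, x 0 (s j) = x 0 j) (x <= kermx (1%:M - (perm_mx s)^T))%MS.
Proof.
rewrite sub_kermx mulmxBr mulmx1 tr_perm_mx -col_permE subr_eq0.
apply: (iffP eqP) => [xs j | xs]; first by rewrite [in RHS]xs mxE.
by apply/rowP => j; rewrite mxE xs.
Qed.

Section PermutationMatrix.
Variables (n : nat) (s : 'S_n).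
Local Notation P := (perm_mx s : 'M[rat]_n).

Lemma matB_perm_mx :
  matB (P + P^T) = 19 / 45 *: ((1%:M - P^T) *m (1%:M - P^T)^T)
                   + 7 / 45 *: ((const_mx 1 : 'cV_n) *m (const_mx 1 : 'cV_n)^T).
Proof.
rewrite mul_const_trmx raddfB /= trmxK trmx1 mulmxBl !mulmxBr !mulmx1 mul1mx.
rewrite mulmx_tr_perm_mx /matB; apply/matrixP => i j; rewrite !mxE.
by field.
Qed.

End PermutationMatrix.


Section CycleDecomposition.
Variables (N : nat) (cs : seq (seq 'I_N)).
Hypotheses (cs_ge3 : all (fun c => 3 <= size c)%N cs) (cs_uniq : uniq (flatten cs))
           (cs_cover : forall v : 'I_N, v \in flatten cs).

Definition cycle_index v := find (fun c => v \in c) cs.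
Definition cycle_of v := nth [::] cs (cycle_index v).
Definition cycle_succ v := next (cycle_of v) v.

Lemma cycle_index_lt v : (cycle_index v < size cs)%N.
Proof. by rewrite -has_find; case/flattenP: (cs_cover v) => c ? ?; apply/hasP; exists c. Qed.

Lemma mem_cycle_of v : v \in cycle_of v.
Proof. by apply: (@nth_find _ [::] (fun c => v \in c)); rewrite has_find cycle_index_lt. Qed.

Lemma cycle_indexP k v : (k < size cs)%N -> v \in nth [::] cs k -> k = cycle_index v.
Proof.
move=> ltk vk; apply: uniq_flatten_nth_mem cs_uniq ltk (cycle_index_lt v) vk _.
exact: mem_cycle_of.
Qed.

Lemma cycle_of_mem c v : c \in cs -> v \in c -> c = cycle_of v.
Proof.
move=> cs_c v_c; rewrite -(nth_index [::] cs_c) /cycle_of; congr nth.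
by apply: cycle_indexP; rewrite ?index_mem ?nth_index.
Qed.

Lemma cycle_of_eq w v : w \in cycle_of v -> cycle_of w = cycle_of v.
Proof. by move=> wv; rewrite /cycle_of -(cycle_indexP (cycle_index_lt v) wv). Qed.

Lemma uniq_cycle_of v : uniq (cycle_of v).
Proof. by apply: uniq_flatten_mem cs_uniq _; rewrite mem_nth ?cycle_index_lt. Qed.

Lemma size_cycle_of v : (2 < size (cycle_of v))%N.
Proof. by apply: (allP cs_ge3); rewrite mem_nth ?cycle_index_lt. Qed.

Lemma mem_cycle_succ v : cycle_succ v \in cycle_of v.
Proof. by rewrite mem_next mem_cycle_of. Qed.

Lemma cycle_of_succ v : cycle_of (cycle_succ v) = cycle_of v.
Proof. exact/cycle_of_eq/mem_cycle_succ. Qed.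

Lemma cycle_succ_inj : injective cycle_succ.
Proof.
move=> v w vw; have cvw : cycle_of v = cycle_of w by rewrite -cycle_of_succ vw cycle_of_succ.
by move: vw; rewrite /cycle_succ cvw; apply: (can_inj (prev_next (uniq_cycle_of w))).
Qed.

Lemma cycle_succ2_neq v : cycle_succ (cycle_succ v) != v.
Proof.
rewrite {1}/cycle_succ cycle_of_succ.
exact: next_next_neq (uniq_cycle_of v) (size_cycle_of v) (mem_cycle_of v).
Qed.

Lemma cycle_succ_invariant (T : Type) (f : 'I_N -> T) :
  (forall v, f (cycle_succ v) = f v) -> forall v w, w \in cycle_of v -> f w = f v.
Proof.
move=> f_succ v; suff f_nth k : (k < size (cycle_of v))%N ->
    f (nth v (cycle_of v) k) = f (nth v (cycle_of v) 0).
  move=> w wv; rewrite -(nth_index v wv) f_nth ?index_mem //.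
  by rewrite -[in RHS](nth_index v (mem_cycle_of v)) f_nth ?index_mem ?mem_cycle_of.
elim: k => [//|k IHk] ltk; rewrite -IHk ?(ltnW ltk) // -[RHS]f_succ.
rewrite /cycle_succ (@cycle_of_eq _ v) ?mem_nth ?(ltnW ltk) //.
by rewrite next_nth_modn ?uniq_cycle_of ?(ltnW ltk) // modn_small.
Qed.

Lemma cycle_adjacent i j :
  has (fun c => (i \in c) && ((j == next c i) || (i == next c j))) cs =
  (cycle_succ i == j) || (cycle_succ j == i).
Proof.
apply/hasP/idP => [[c cs_c /andP[i_c]] | ij].
  rewrite /cycle_succ -(cycle_of_mem cs_c i_c) ![_ == next _ _]eq_sym.
  case/orP=> [-> // | ji]; case j_c: (j \in c).
    by rewrite -(cycle_of_mem cs_c j_c) ji orbT.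
  by move: ji i_c; rewrite next_nth j_c => /eqP <-; rewrite j_c.
exists (cycle_of i); first by rewrite mem_nth ?cycle_index_lt.
rewrite mem_cycle_of /= ![_ == next _ _]eq_sym; case/orP: ij => [-> // | /eqP ji].
have -> : cycle_of i = cycle_of j by apply: cycle_of_eq; rewrite -ji mem_cycle_succ.
by rewrite -/(cycle_succ j) ji eqxx orbT.
Qed.

Definition cycle_perm : 'S_N := perm cycle_succ_inj.

Lemma cycle_permE : cycle_perm =1 cycle_succ.
Proof. exact: permE. Qed.

Lemma cycles_adj_perm : cycles_adj cs = perm_mx cycle_perm + (perm_mx cycle_perm)^T.
Proof.
apply/matrixP => i j; rewrite !mxE !cycle_permE cycle_adjacent.
have := cycle_succ2_neq i; case: (cycle_succ i =P j) => [<- /negbTE-> | _ _] /=.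
  by rewrite addr0.
by rewrite add0r.
Qed.

Definition cycle_indicator_mx : 'M[rat]_(size cs, N) :=
  \matrix_(k, j) (j \in nth [::] cs k)%:R.

Lemma mulmx_cycle_indicator (y : 'rV_(size cs)) j :
  (y *m cycle_indicator_mx) 0 j = y 0 (Ordinal (cycle_index_lt j)).
Proof.
rewrite mxE (bigD1 (Ordinal (cycle_index_lt j))) //= big1 ?addr0.
  by rewrite mxE -/(cycle_of j) mem_cycle_of mulr1.
move=> k k_neq; rewrite mxE; case: (boolP (j \in _)) => [jk | _]; last by rewrite mulr0.
by case/negP: k_neq; apply/eqP/val_inj; exact: cycle_indexP (ltn_ord k) jk.
Qed.

Lemma rank_cycle_indicator_mx : \rank cycle_indicator_mx = size cs.
Proof.
apply/eqP/inj_row_free => y yU0; apply/rowP => k; rewrite mxE.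
have [v vk] : exists v, v \in nth [::] cs k.
  have := allP cs_ge3 _ (mem_nth [::] (ltn_ord k)).
  by case: (nth [::] cs k) => [|v c] //= _; exists v; rewrite mem_head.
have := congr1 (fun M : 'rV_N => M 0 v) yU0; rewrite mulmx_cycle_indicator mxE => <-.
by congr (y 0 _); apply/val_inj; exact: (cycle_indexP (ltn_ord k) vk).
Qed.

Lemma cycle_indicator_mxP (x : 'rV_N) :
  reflect (forall j, x 0 (cycle_succ j) = x 0 j) (x <= cycle_indicator_mx)%MS.
Proof.
apply: (iffP submxP) => [[y ->] j | x_succ].
  rewrite !mulmx_cycle_indicator; congr (y 0 _); apply/val_inj => /=.
  exact/esym/cycle_indexP/mem_cycle_succ/cycle_index_lt.
exists (\row_k if nth [::] cs k is v :: _ then x 0 v else 0).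
apply/rowP => j; rewrite mulmx_cycle_indicator mxE /= -/(cycle_of j).
have := mem_cycle_of j; case cj: (cycle_of j) => [|v c] // _.
have vj : v \in cycle_of j by rewrite cj mem_head.
exact: esym (cycle_succ_invariant x_succ vj).
Qed.

Lemma sub_kermx_matB_cycles (x : 'rV_N) :
  (x <= kermx (matB (cycles_adj cs)))%MS =
  (x <= cycle_indicator_mx :&: kermx (const_mx 1 : 'cV_N))%MS.
Proof.
rewrite cycles_adj_perm matB_perm_mx sub_kermx_gram2 ?divr_gt0 ?ltr0n // !sub_capmx.
congr andb; apply/sub_kermx_perm_fixP/cycle_indicator_mxP => x_succ j.
  by rewrite -cycle_permE x_succ.
by rewrite cycle_permE x_succ.
Qed.

Lemma rank_matB_cycles : (0 < N)%N -> \rank (matB (cycles_adj cs)) = (N.+1 - size cs)%N.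
Proof.
move=> N_gt0; set B := matB _; set U := cycle_indicator_mx.
set e : 'cV[rat]_N := const_mx 1.
have rkerB : \rank (kermx B) = (size cs).-1 :> nat.
  have -> : \rank (kermx B) = \rank (U :&: kermx e).
    apply/eqP; rewrite eqn_leq !mxrankS //; apply/row_subP => i.
      by rewrite sub_kermx_matB_cycles row_sub.
    by rewrite -sub_kermx_matB_cycles row_sub.
  rewrite mxrank_cap_kermx_col ?rank_cycle_indicator_mx //.
    by apply/cycle_indicator_mxP => j; rewrite !mxE.
  apply/eqP => /matrixP/(_ 0 0); rewrite !mxE (eq_bigr (fun=> 1)) => [|j _].
    by rewrite sumr_const card_ord => /eqP; rewrite pnatr_eq0 gtn_eqF.
  by rewrite !mxE mulr1.
have size_gt0 : (0 < size cs)%N := leq_ltn_trans (leq0n _) (cycle_index_lt (Ordinal N_gt0)).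
have := mxrank_ker B; have := rank_leq_col B; rewrite rkerB; lia.
Qed.

End CycleDecomposition.

Theorem mainTheorem15 (n : nat) (cs : seq (seq 'I_20)) :
  size cs = n -> is_cycle_decomp cs ->
  \rank (matB (cycles_adj cs)) = (21 - n)%N.
Proof. by move=> <- [cs_ge3 cs_uniq cs_cover]; apply: rank_matB_cycles. Qed.
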